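(* For all $\mathit{in}_1, \mathit{in}_2, \mathit{in}_3 \in \mathcal{T}$, if $\mathit{in}_3 \hookrightarrow \mathit{in}_2$ and $\mathit{in}_2 \hookrightarrow \mathit{in}_1$, then $\mathit{in}_3 \hookrightarrow \mathit{in}_1$.
   Context: $\mathcal{T}$ is a finite set of inputs. Each input $\mathit{in}$ covers a nonempty finite set $\mathrm{Obj}(\mathit{in})$ of objectives and has a cost $c(\mathit{in}) > 0$. For $S \subseteq \mathcal{T}$, $\mathrm{Obj}(S) = \bigcup_{\mathit{in} \in S} \mathrm{Obj}(\mathit{in})$ and $c(S) = \sum_{\mathit{in} \in S} c(\mathit{in})$. There are no duplicates: two distinct inputs of $\mathcal{T}$ never have both the same set of covered objectives and the same cost. Local dominance of an input by a subset: for $\mathit{in} \in \mathcal{T}$ and $S \subseteq \mathcal{T}$, $\mathit{in} \sqsubseteq S$ iff $\mathit{in} \notin S$, $\mathrm{Obj}(\mathit{in}) \subseteq \mathrm{Obj}(S)$ and $c(\mathit{in}) \ge c(S)$. Local dominance between inputs: $\mathit{in}_1 \hookrightarrow \mathit{in}_2$ iff there exists $S \subseteq \mathcal{T}$ with $\mathit{in}_1 \in S$ and $\mathit{in}_2 \sqsubseteq S$. *)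

From mathcomp Require Import all_boot all_order all_algebra.
Set Implicit Arguments. Unset Strict Implicit. Unset Printing Implicit Defensive.
Import Order.TTheory GRing.Theory Num.Theory.
Local Open Scope ring_scope.

Section Dominance.
Variables (R : realFieldType) (O T : finType).
Variables (Obj : T -> {set O}) (c : T -> R).

Definition ObjS (S : {set T}) : {set O} := \bigcup_(i in S) Obj i.
Definition costS (S : {set T}) : R := \sum_(i in S) c i.

Definition ldom_set (i : T) (S : {set T}) : Prop :=
  i \notin S /\ Obj i \subset ObjS S /\ costS S <= c i.

Definition ldom (i1 i2 : T) : Prop :=
  exists S : {set T}, i1 \in S /\ ldom_set i2 S.
End Dominance.

(* Merge the two witnesses: if S1 shows in3 ↪ in2 and S2 shows in2 ↪ in1, then S1 ∪ (S2 ∖ {in2})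
   shows in3 ↪ in1, because in2 is covered by S1 at no greater cost than in2 itself.  The only
   subtle point is that in1 must not lie in S1; this holds because ↪ is asymmetric: a 2-cycle
   forces both witnesses to be singletons of equal cost and objectives, contradicting the absence
   of duplicates. *)
From mathcomp Require Import all_boot all_order all_algebra.
Set Implicit Arguments. Unset Strict Implicit. Unset Printing Implicit Defensive.
Import Order.TTheory GRing.Theory Num.Theory.
Local Open Scope ring_scope.

Section Cost.
Variables (R : realFieldType) (T : finType) (c : T -> R).

Lemma costS_setD1 (i : T) (S : {set T}) :
  i \in S -> costS c S = c i + costS c (S :\ i).
Proof. exact: big_setD1. Qed.

Hypothesis c_ge0 : forall i, 0 <= c i.

Lemma costS_ge0 (S : {set T}) : 0 <= costS c S.
Proof. exact: sumr_ge0. Qed.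

Lemma le_costS_mem (i : T) (S : {set T}) : i \in S -> c i <= costS c S.
Proof. by move=> iS; rewrite (costS_setD1 iS) lerDl costS_ge0. Qed.

Lemma costS_setD_le (A B : {set T}) : costS c (A :\: B) <= costS c A.
Proof. by rewrite [leRHS](big_setID B) lerDr costS_ge0. Qed.

Lemma costS_setU_le (A B : {set T}) : costS c (A :|: B) <= costS c A + costS c B.
Proof.
rewrite {1}/costS (big_setID A) setUK setDUl setDv set0U.
by rewrite lerD2l costS_setD_le.
Qed.

End Cost.

Lemma costS_le_mem_set1 (R : realFieldType) (T : finType) (c : T -> R)
    (c_pos : forall i, 0 < c i) (i : T) (S : {set T}) :
  i \in S -> costS c S <= c i -> S = [set i].
Proof.
move=> iS leSi; apply/eqP; rewrite eqEsubset sub1set iS andbT.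
apply/subsetP => j jS; rewrite inE; apply: contraTT leSi => ji.
rewrite -ltNge (costS_setD1 _ iS) ltrDl (lt_le_trans (c_pos j)) //.
by rewrite le_costS_mem ?inE ?ji // => k; apply: ltW.
Qed.

Section Dominance.
Variables (R : realFieldType) (O T : finType).
Variables (Obj : T -> {set O}) (c : T -> R).

Lemma ObjS_set1 (i : T) : ObjS Obj [set i] = Obj i.
Proof. exact: big_set1. Qed.

Lemma ObjS_setU_setD1 (i : T) (A B : {set T}) :
  Obj i \subset ObjS Obj A -> ObjS Obj B \subset ObjS Obj (A :|: B :\ i).
Proof.
move=> covA; apply/bigcupsP => j jB.
have [->|ji] := eqVneq j i.
  by apply: subset_trans covA _; apply/bigcupsP => k kA; apply: bigcup_sup; rewrite inE kA.
by apply: bigcup_sup; rewrite !inE ji jB orbT.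
Qed.

Lemma ldom_set_compose (c_ge0 : forall i, 0 <= c i) (in1 in2 : T) (S1 S2 : {set T}) :
    in2 \in S2 -> in1 \notin S1 ->
    ldom_set Obj c in2 S1 -> ldom_set Obj c in1 S2 ->
  ldom_set Obj c in1 (S1 :|: S2 :\ in2).
Proof.
move=> in2S2 in1S1 [_ [cov2 cost2]] [in1S2 [cov1 cost1]]; split; [|split].
- by rewrite !inE negb_or in1S1 negb_and in1S2 orbT.
- by apply: subset_trans cov1 _; apply: ObjS_setU_setD1.
- apply: le_trans (costS_setU_le c_ge0 _ _) (le_trans _ cost1).
  by rewrite (costS_setD1 _ in2S2) lerD2r.
Qed.

Lemma ldom_asym (c_pos : forall i, 0 < c i)
    (no_dup : forall i j : T, Obj i = Obj j -> c i = c j -> i = j) (in1 in2 : T) :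
  ldom Obj c in1 in2 -> ~ ldom Obj c in2 in1.
Proof.
move=> [S1 [in1S1 [in2S1 [cov2 cost2]]]] [S2 [in2S2 [_ [cov1 cost1]]]].
have c_ge0 i : 0 <= c i by apply: ltW.
have le21 : c in2 <= c in1 := le_trans (le_costS_mem c_ge0 in2S2) cost1.
have le12 : c in1 <= c in2 := le_trans (le_costS_mem c_ge0 in1S1) cost2.
have S1E : S1 = [set in1] by apply: costS_le_mem_set1 (le_trans cost2 le21).
have S2E : S2 = [set in2] by apply: costS_le_mem_set1 (le_trans cost1 le12).
move: cov1 cov2 in2S1; rewrite S1E S2E !ObjS_set1 inE => cov1 cov2 /eqP; apply.
apply: no_dup; first by apply/eqP; rewrite eqEsubset cov1 cov2.
by apply/eqP; rewrite eq_le le12 le21.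
Qed.

End Dominance.

Theorem mainTheorem8 (R : realFieldType) (O T : finType)
    (Obj : T -> {set O}) (c : T -> R)
    (Obj_nonempty : forall i : T, Obj i != set0)
    (c_pos : forall i : T, 0 < c i)
    (no_dup : forall i j : T, Obj i = Obj j -> c i = c j -> i = j) :
  forall in1 in2 in3 : T,
    ldom Obj c in3 in2 -> ldom Obj c in2 in1 -> ldom Obj c in3 in1.
Proof.
move=> in1 in2 in3 [S1 [in3S1 dom2]] [S2 [in2S2 dom1]].
have in1S1 : in1 \notin S1.
  apply/negP => in1S1.
  by apply: (ldom_asym c_pos no_dup (in1 := in1) (in2 := in2)); [exists S1 | exists S2].
exists (S1 :|: S2 :\ in2); split; first by rewrite inE in3S1.
by apply: ldom_set_compose => // i; apply: ltW.
Qed.
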